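(* Let $\mathfrak F$ be a Frankenstein graph with partition $\{\mathsf G_1,\dots,\mathsf G_m\}$. Then there exists a permutation $\sigma$ of $\{1,\dots,m\}$ such that, writing $\mathfrak F_i=\mathsf G_{\sigma(1)}\cup\dots\cup\mathsf G_{\sigma(i)}$, we have $|V(\mathfrak F_i)\cap V(\mathsf G_{\sigma(i+1)})|\le 1$ for every $i\in\{1,\dots,m-1\}$.
   Context: A (colored) graph is a finite set $\mathsf G$ of pairs $(e,\alpha)$, where the $e$'s are pairwise distinct 2-element subsets of a vertex set and $\alpha$ is a color (colors may repeat). $V(\mathsf G)$ is its vertex set and $\chi(\mathsf G)$ its set of colors; $\mathsf G$ is rainbow if $|\chi(\mathsf G)|=|\mathsf G|$ and almost rainbow if $|\chi(\mathsf G)|=|\mathsf G|-1$. A subgraph is a subset. Paths, cycles, trees are colored graphs whose underlying uncolored edges form a path (two distinct terminals), cycle, or tree; lengths count edges. A long rainbow odd cycle is a rainbow cycle of odd length at least $7$. A theta graph is a union $\mathsf P_1\cup\mathsf P_2\cup\mathsf P_3$ of three paths with the same terminals $s\neq t$ such that any two share no vertex other than $s,t$ and no underlying uncolored edge. A bad piece is an almost rainbow theta graph with at least $6$ vertices that is the union of three rainbow paths as in the definition of a theta graph. A partition of a graph $\mathsf G$ is a collection $\{\mathsf G_1,\dots,\mathsf G_m\}$ of graphs with $\mathsf G=\bigcup_i\mathsf G_i$ and, for $i\ne j$, $|V(\mathsf G_i)\cap V(\mathsf G_j)|\le 1$ and $\chi(\mathsf G_i)\cap\chi(\mathsf G_j)=\emptyset$;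 its members are called parts. A Frankenstein graph is a graph $\mathfrak F$ together with a partition $\{\mathsf C_1,\dots,\mathsf C_c,\mathsf B_1,\dots,\mathsf B_b,\mathsf T_1,\dots,\mathsf T_t\}$ ($c,b,t\ge0$, $c+b+t\ge1$) in which the $\mathsf C_i$ are long rainbow odd cycles, the $\mathsf B_i$ are bad pieces and the $\mathsf T_i$ are rainbow trees, such that (F1) $V(\mathsf T_p)\cap V(\mathsf T_q)=\emptyset$ for $p\neq q$, and (F2) no subgraph of $\mathfrak F$ is a rainbow even cycle. *)

From mathcomp Require Import all_boot all_fingroup.
Set Implicit Arguments. Unset Strict Implicit. Unset Printing Implicit Defensive.

Section ColoredGraphs.
Variables (T C : finType).

Definition cgraph_of := {set ({set T} * C)}.

Definition is_cgraph (G : cgraph_of) : Prop :=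
  (forall x, x \in G -> #|x.1| = 2) /\
  (forall x y, x \in G -> y \in G -> x.1 = y.1 -> x = y).

Definition edges (G : cgraph_of) : {set {set T}} := [set x.1 | x in G].
Definition verts (G : cgraph_of) : {set T} := \bigcup_(x in G) x.1.
Definition colors (G : cgraph_of) : {set C} := [set x.2 | x in G].

Definition rainbow (G : cgraph_of) : Prop := #|colors G| = #|G|.
Definition almost_rainbow (G : cgraph_of) : Prop := #|colors G| = #|G| - 1.

Definition is_path_st (G : cgraph_of) (a b : T) : Prop :=
  exists s : seq T, [/\ uniq s, 2 <= size s, head a s = a, last a s = b &
    edges G = [set [set p.1; p.2] | p in zip s (behead s)]].

Definition is_path (G : cgraph_of) : Prop :=
  exists a b, a != b /\ is_path_st G a b.

Definition is_cycle (G : cgraph_of) : Prop :=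
  exists s : seq T, [/\ uniq s, 3 <= size s &
    edges G = [set [set p.1; p.2] | p in zip s (rot 1 s)]].

Definition adj (G : cgraph_of) : rel T := fun x y => [set x; y] \in edges G.

Definition connected (G : cgraph_of) : Prop :=
  forall x y, x \in verts G -> y \in verts G -> connect (adj G) x y.

Definition is_tree (G : cgraph_of) : Prop :=
  [/\ G != set0, connected G & forall H : cgraph_of, H \subset G -> ~ is_cycle H].

Definition long_rainbow_odd_cycle (G : cgraph_of) : Prop :=
  [/\ is_cycle G, rainbow G, odd #|G| & 7 <= #|G|].

Definition rainbow_even_cycle (G : cgraph_of) : Prop :=
  [/\ is_cycle G, rainbow G & ~~ odd #|G|].

Definition theta_paths (P1 P2 P3 : cgraph_of) (s t : T) : Prop :=
  [/\ s != t /\ is_path_st P1 s t, is_path_st P2 s t, is_path_st P3 s t,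
      [/\ verts P1 :&: verts P2 \subset [set s; t],
          verts P1 :&: verts P3 \subset [set s; t] &
          verts P2 :&: verts P3 \subset [set s; t]] &
      [/\ [disjoint edges P1 & edges P2],
          [disjoint edges P1 & edges P3] &
          [disjoint edges P2 & edges P3]]].

Definition is_theta (G : cgraph_of) : Prop :=
  exists P1 P2 P3 s t, theta_paths P1 P2 P3 s t /\ G = P1 :|: P2 :|: P3.

Definition bad_piece (G : cgraph_of) : Prop :=
  [/\ almost_rainbow G, 6 <= #|verts G| &
    exists P1 P2 P3 s t, [/\ theta_paths P1 P2 P3 s t, G = P1 :|: P2 :|: P3,
                            rainbow P1, rainbow P2 & rainbow P3]].

Definition is_partition (m : nat) (F : cgraph_of) (P : 'I_m -> cgraph_of) : Prop :=
  [/\ F = \bigcup_(i < m) P i,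
      forall i j : 'I_m, i != j -> #|verts (P i) :&: verts (P j)| <= 1 &
      forall i j : 'I_m, i != j -> [disjoint colors (P i) & colors (P j)]].

Definition frankenstein (m : nat) (F : cgraph_of) (P : 'I_m -> cgraph_of) : Prop :=
  [/\ is_cgraph F /\ 1 <= m, is_partition F P,
      forall i : 'I_m, [\/ long_rainbow_odd_cycle (P i), bad_piece (P i)
                          | (is_tree (P i) /\ rainbow (P i))],
      forall i j : 'I_m, i != j -> is_tree (P i) -> rainbow (P i) ->
        is_tree (P j) -> rainbow (P j) -> [disjoint verts (P i) & verts (P j)] &
      forall H : cgraph_of, H \subset F -> ~ rainbow_even_cycle H].

End ColoredGraphs.

From mathcomp Require Import all_boot all_fingroup.
Set Implicit Arguments. Unset Strict Implicit. Unset Printing Implicit Defensive.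

(* The parts are placed greedily, block by block: a block grows by a part that
   meets it in exactly one vertex, and a new block is started when no unplaced
   part meets the current one.  This never gets stuck because no unplaced part
   [A] meets a block in two vertices [x], [y].  The block is connected by
   rainbow paths, and distinct parts have disjoint colours.  If [A] is a long
   odd cycle or a bad piece, [x] and [y] are joined inside [A] by rainbow paths
   of both parities (the one repeated colour of a bad piece is avoided by one
   of the two cycles through its third path); one of them closes a rainbow path
   of the block into a rainbow even cycle, contradicting (F2).  If [A] is a
   tree, (F1) puts [x] only in non-tree parts of the block, and the same parity
   argument is run inside such a part instead. *)

Section WalkEdges.
Variable T : finType.
Implicit Types (x y z a : T) (r s : seq T).

Fixpoint walk_edges x r : seq {set T} :=
  if r is y :: r' then [set x; y] :: walk_edges y r' else [::].

Definition cycle_edges a s := walk_edges a (rcons s a).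

Lemma walk_edges_cat x r1 r2 :
  walk_edges x (r1 ++ r2) = walk_edges x r1 ++ walk_edges (last x r1) r2.
Proof. by elim: r1 x => [|y r1 IH] x //=; rewrite IH. Qed.

Lemma walk_edges_rcons x r z :
  walk_edges x (rcons r z) = rcons (walk_edges x r) [set last x r; z].
Proof. by rewrite -cats1 walk_edges_cat cats1. Qed.

Lemma size_walk_edges x r : size (walk_edges x r) = size r.
Proof. by elim: r x => [|y r IH] x //=; rewrite IH. Qed.

Lemma walk_edges_rev x r :
  walk_edges (last x r) (rev (belast x r)) = rev (walk_edges x r).
Proof.
elim: r x => [|y r IH] x //=.
rewrite rev_cons walk_edges_rcons IH rev_cons setUC; congr (rcons _ [set _; _]).
by case: r {IH} => [|z r] //=; rewrite rev_cons last_rcons.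
Qed.

Lemma walk_edges_zip x r :
  walk_edges x r = [seq [set p.1; p.2] | p <- zip (x :: r) r].
Proof. by elim: r x => [|y r IH] x //=; rewrite IH. Qed.

Lemma walk_edges_rcons_zip x s z :
  walk_edges x (rcons s z) = [seq [set p.1; p.2] | p <- zip (x :: s) (rcons s z)].
Proof. by elim: s x => [|y s IH] x //=; rewrite IH. Qed.

Lemma walk_edgesP x r e : e \in walk_edges x r ->
  exists a b, [/\ e = [set a; b], a \in x :: r & b \in r].
Proof.
elim: r x => [|y r IH] x //=; rewrite inE => /orP[/eqP->|/IH[a [b [-> Ha Hb]]]].
  by exists x, y; rewrite !inE !eqxx.
exists a, b; split; rewrite // inE ?Hb ?orbT //.
by move: Ha; rewrite inE => /orP[/eqP->|->]; rewrite ?eqxx ?orbT.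
Qed.

Lemma walk_edges_cover x r v : v \in x :: r -> r != [::] ->
  exists2 e, e \in walk_edges x r & v \in e.
Proof.
elim: r x => [|y r IH] x // Hv _.
move: Hv; rewrite inE => /orP[/eqP->|Hv]; first by exists [set x; y]; rewrite !inE ?eqxx.
case: r IH Hv => [|z r] IH Hv.
  by exists [set x; y]; move: Hv; rewrite !inE // => ->; rewrite orbT.
by have [e He Hve] := IH y Hv isT; exists e; rewrite // inE He orbT.
Qed.

Lemma uniq_walk_edges x r : uniq (x :: r) -> uniq (walk_edges x r).
Proof.
elim: r x => [|y r IH] x //= /andP[]; rewrite inE negb_or => /andP[xy xr] /andP[yr ur].
rewrite IH /= ?yr ?ur // andbT; apply/negP => /walk_edgesP[a [b [e ha hb]]].
have: x \in [set a; b] by rewrite -e !inE eqxx.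
rewrite !inE => /orP[]/eqP E; subst.
  by move: ha; rewrite inE (negbTE xy) (negbTE xr).
by rewrite hb in xr.
Qed.

Lemma perm_cycle_edges_rot a s1 x s2 :
  perm_eq (cycle_edges a (s1 ++ x :: s2)) (cycle_edges x (s2 ++ a :: s1)).
Proof.
rewrite /cycle_edges -!cats1 -!catA !cat_cons !walk_edges_cat /= !cats1.
rewrite !walk_edges_rcons -!cats1 /=.
set A := walk_edges a s1; set B := walk_edges x s2.
set e1 := [set last a s1; x]; set e2 := [set last x s2; a].
rewrite (perm_catC A) /= -catA /=.
have -> : B ++ e2 :: A ++ [:: e1] = rcons (B ++ e2 :: A) e1 by rewrite -cats1 -catA.
by rewrite perm_sym perm_rcons.
Qed.

Lemma uniq_cycle_edges a s : uniq (a :: s) -> 2 <= size s -> uniq (cycle_edges a s).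
Proof.
case: s => [|y s] //= /andP[]; rewrite inE negb_or => /andP[ay as_] Hu Hs.
have ys : last y s != y.
  case: s Hs Hu {as_} => [|z s] // _ /andP[yzs _] /=.
  by apply: contraNneq yzs => <-; exact: mem_last.
have a_out e : e \in walk_edges y s -> a \notin e.
  have ays : a \notin y :: s by rewrite inE negb_or ay.
  move=> /walk_edgesP[u [v [-> Hu' Hv]]]; rewrite !inE; apply/norP.
  by split; apply: contraNneq ays => ->; rewrite // inE Hv orbT.
rewrite /cycle_edges /= walk_edges_rcons /= rcons_uniq uniq_walk_edges // andbT.
rewrite mem_rcons inE negb_or -andbA; apply/and3P; split.
- apply/eqP => E; have : y \in [set last y s; a] by rewrite -E !inE eqxx orbT.
  by rewrite !inE eq_sym (negbTE ys) eq_sym (negbTE ay).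
- by apply/negP => /a_out; rewrite !inE eqxx.
- by apply/negP => /a_out; rewrite !inE eqxx orbT.
Qed.

Lemma cycle_edges_glue x r q : uniq (x :: r) -> uniq q ->
    {in q, forall v, v \notin x :: r} ->
  uniq (x :: r ++ q) /\ cycle_edges x (r ++ q) =
                       walk_edges x r ++ walk_edges (last x r) (rcons q x).
Proof.
move=> ur uq qr; rewrite /cycle_edges rcons_cat walk_edges_cat -cat_cons cat_uniq ur uq.
by split=> //; rewrite andbT; apply/hasPn.
Qed.

(* The inner vertices of any walk [x :: r], from last to first. *)
Definition rev_inner r := if r is c :: r' then rev (belast c r') else [::].

Lemma rev_belast_inner x r : r != [::] -> rev (belast x r) = rcons (rev_inner r) x.
Proof. by case: r => [|c r] //= _; rewrite rev_cons. Qed.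

End WalkEdges.

Lemma inj_in_uniq_map (A B : eqType) (f : A -> B) (s : seq A) :
  uniq (map f s) -> {in s &, injective f}.
Proof.
elim: s => [|z s IH] //= /andP[nz us] u v; rewrite !inE.
case/orP=> [/eqP->|us'] /orP[/eqP->|vs] //.
- by move=> E; move: nz; rewrite E map_f.
- by move=> E; move: nz; rewrite -E map_f.
- exact: IH.
Qed.

Section ColoredGraph.
Variables (T C : finType) (F : cgraph_of T C).
Hypothesis HF : is_cgraph F.
Implicit Types (x y z v w : T) (r s : seq T) (E : {set {set T}}) (G : cgraph_of T C).

Definition edge_color (e : {set T}) : option C :=
  omap snd [pick u in F | u.1 == e].

Lemma edge_colorE u : u \in F -> edge_color u.1 = Some u.2.
Proof.
move=> uF; rewrite /edge_color; case: pickP => [u' /andP[u'F /eqP E]|/(_ u)].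
  by rewrite (HF.2 _ _ u'F uF E).
by rewrite uF eqxx.
Qed.

Lemma edgesP G e : reflect (exists2 u, u \in G & e = u.1) (e \in edges G).
Proof. exact: imsetP. Qed.

Lemma vertsP G v : reflect (exists2 u, u \in G & v \in u.1) (v \in verts G).
Proof. exact: bigcupP. Qed.

Lemma verts_edgesP G v : reflect (exists2 e, e \in edges G & v \in e) (v \in verts G).
Proof.
apply: (iffP (vertsP G v)) => [[u uG vu]|[e /edgesP[u uG ->] vu]]; last by exists u.
by exists u.1 => //; apply/edgesP; exists u.
Qed.

Lemma edgesS G G' : G \subset G' -> edges G \subset edges G'.
Proof. exact: imsetS. Qed.

Lemma rainbow_inj G : rainbow G -> {in G &, injective snd}.
Proof. by rewrite /rainbow /colors => Hr; apply/imset_injP; rewrite Hr. Qed.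

Lemma edge_color_inj G : G \subset F -> {in G &, injective snd} ->
  {in edges G &, injective edge_color}.
Proof.
move=> GF Hi e e' /edgesP[u uG ->] /edgesP[u' u'G ->].
by rewrite !edge_colorE ?(subsetP GF) // => -[E]; rewrite (Hi _ _ uG u'G E).
Qed.

Lemma uniq_edge_color G L : G \subset F -> {in G &, injective snd} -> uniq L ->
  all (fun e => e \in edges G) L -> uniq (map edge_color L).
Proof.
move=> GF Hi uL /allP aL; rewrite map_inj_in_uniq // => e e' He He'.
exact: (edge_color_inj GF Hi (aL _ He) (aL _ He')).
Qed.

(* A path is given by its first vertex [x] and the list [r] of the others;
   colours are those of [F]. *)
Definition rpath E x r y :=
  [/\ uniq (x :: r), last x r = y, all (fun e => e \in E) (walk_edges x r)
    & uniq (map edge_color (walk_edges x r))].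

Lemma rpathS E E' x r y : E \subset E' -> rpath E x r y -> rpath E' x r y.
Proof.
by move=> EE' [u l /allP a c]; split=> //; apply/allP => e /a; apply: (subsetP EE').
Qed.

Lemma rpath_rev E x r y : rpath E x r y -> rpath E y (rev (belast x r)) x.
Proof.
have Hrev : last x r :: rev (belast x r) = rev (x :: r).
  by rewrite [in RHS]lastI rev_rcons.
case=> u l a c; subst y; split.
- by rewrite Hrev rev_uniq.
- by case: r Hrev {u a c} => [|z r] //= _; rewrite rev_cons last_rcons.
- by rewrite walk_edges_rev all_rev.
- by rewrite walk_edges_rev map_rev rev_uniq.
Qed.

Lemma rpath_cat E x r1 y r2 z : rpath E x r1 y -> rpath E y r2 z ->
  {in r2, forall v, v \notin x :: r1} ->
  {in walk_edges x r1 & walk_edges y r2, forall e e', edge_color e != edge_color e'} ->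
  rpath E x (r1 ++ r2) z.
Proof.
move=> [u1 l1 a1 c1] [u2 l2 a2 c2] Hv Hc; split.
- rewrite -cat_cons cat_uniq u1 /=; move: u2 => /= /andP[_ ->]; rewrite andbT.
  by apply/hasPn => v /Hv.
- by rewrite last_cat l1.
- by rewrite walk_edges_cat l1 all_cat a1 a2.
- rewrite walk_edges_cat l1 map_cat cat_uniq c1 c2 andbT /=.
  apply/hasPn => c /mapP[e' He' ->].
  by apply/mapP => -[e He /eqP]; rewrite eq_sym; apply/negP; exact: Hc.
Qed.

Lemma rpath_prefix E x r1 r2 z : rpath E x (r1 ++ r2) z -> rpath E x r1 (last x r1).
Proof.
move=> [u l a c]; split => //.
- by move: u; rewrite -cat_cons cat_uniq => /andP[].
- by move: a; rewrite walk_edges_cat all_cat => /andP[].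
- by move: c; rewrite walk_edges_cat map_cat cat_uniq => /andP[].
Qed.

Lemma rpath_suffix E x r1 r2 z : rpath E x (r1 ++ r2) z -> rpath E (last x r1) r2 z.
Proof.
move=> [u l a c]; split => //.
- by move: u; rewrite -cat_cons lastI cat_rcons cat_uniq => /and3P[_ _ ->].
- by rewrite -l last_cat.
- by move: a; rewrite walk_edges_cat all_cat => /andP[].
- by move: c; rewrite walk_edges_cat map_cat cat_uniq => /and3P[].
Qed.

Lemma rpath_verts G x r y : rpath (edges G) x r y -> {subset r <= verts G}.
Proof.
case=> _ _ /allP a _ v vr.
have vxr : v \in x :: r by rewrite inE vr orbT.
have [e He ve] := walk_edges_cover vxr (ltac:(by case: r vr {a vxr})).
by apply/verts_edgesP; exists e => //; exact: a.
Qed.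

Lemma rpath_last_mem E x r y : rpath E x r y -> x != y -> y \in r.
Proof. by case=> _ <- _ _ xl; have := mem_last x r; rewrite inE eq_sym (negbTE xl). Qed.

Lemma rpath_first_hit E (p : pred T) x r y : rpath E x r y -> has p r ->
  exists r1 z, [/\ rpath E x (rcons r1 z) z, p z, ~~ has p r1 & {subset rcons r1 z <= r}].
Proof.
move=> Pr hpr; move: Pr; case/split_find: hpr => z r1 r2 pz hr1 Pr.
exists r1, z; split => //; last by move=> u ur; rewrite mem_cat ur.
by have := rpath_prefix Pr; rewrite last_rcons.
Qed.

Definition parity_paths E x y := exists r1 r2,
  [/\ rpath E x r1 y, rpath E x r2 y & odd (size r1) != odd (size r2)].

End ColoredGraph.

Section EvenCycleFree.
Variables (T C : finType) (F : cgraph_of T C).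
Hypothesis HF : is_cgraph F.
Hypothesis F2 : forall H : cgraph_of T C, H \subset F -> ~ rainbow_even_cycle H.
Implicit Types (x y z a w : T) (r s : seq T) (E : {set {set T}}).
Local Notation color := (edge_color F).
Local Notation rpath := (rpath F).

Lemma rainbow_cycle_odd a s : uniq (a :: s) -> all (fun e => e \in edges F) (cycle_edges a s) ->
  uniq (map color (cycle_edges a s)) -> odd (size s).+1.
Proof.
move=> Hu Ha Hc; rewrite oddS; apply/negP => Hodd.
have Hs : 2 <= size s.
  case: s Hu Ha Hc Hodd => [|y [|z s]] // _ _.
  by rewrite /cycle_edges /= inE [[set y; a]]setUC eqxx.
set H := [set u in F | u.1 \in cycle_edges a s].
apply: (F2 (H := H)); first by apply/subsetP => u; rewrite inE => /andP[].
have HE : edges H = [set e | e \in cycle_edges a s].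
  apply/setP => e; rewrite inE; apply/edgesP/idP => [[u]|He].
    by rewrite inE => /andP[_ ?] ->.
  have /edgesP[u uF Eu] := allP Ha _ He.
  by exists u; rewrite // inE uF -Eu He.
split.
- exists (a :: s); split => //; rewrite rot1_cons HE; apply/setP => e.
  rewrite inE /cycle_edges walk_edges_rcons_zip.
  by apply/idP/imsetP => [/mapP[p Hp ->]|[p Hp ->]]; [exists p | apply: map_f].
- rewrite /rainbow /colors; apply/eqP/imset_injP => u u'; rewrite !inE.
  move=> /andP[uF ue] /andP[u'F u'e] E; apply: HF.2 => //.
  by apply: (inj_in_uniq_map Hc ue u'e); rewrite !edge_colorE // E.
- have -> : #|H| = #|edges H|.
    rewrite /edges card_in_imset // => u u'.
    by rewrite !inE => /andP[uF _] /andP[u'F _]; exact: HF.2.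
  rewrite HE cardsE (card_uniqP (map_uniq Hc)) /cycle_edges size_walk_edges size_rcons.
  by rewrite oddS negbK.
Qed.

Lemma rainbow_cycle_parity_paths_base E x s w : E \subset edges F -> uniq (x :: s) ->
  all (fun e => e \in E) (cycle_edges x s) -> uniq (map color (cycle_edges x s)) -> w \in s ->
  exists r1 r2, [/\ rpath E x r1 w, rpath E x r2 w, odd (size r1) != odd (size r2),
    {subset r1 <= x :: s} & {subset r2 <= x :: s}].
Proof.
move=> EF Hu Ha Hc Hw.
have Hev : ~~ odd (size s).
  rewrite -oddS; apply: rainbow_cycle_odd Hu _ Hc.
  by apply/allP => e /(allP Ha); apply: (subsetP EF).
case/splitPr: Hw Hu Ha Hc Hev => s1 s2 Hu Ha Hc Hev.
have Ecyc : cycle_edges x (s1 ++ w :: s2) = walk_edges x (rcons s1 w) ++ walk_edges w (rcons s2 x).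
  by rewrite /cycle_edges rcons_cat -cat_rcons walk_edges_cat last_rcons.
rewrite Ecyc in Ha Hc.
have P1 : rpath E x (rcons s1 w) w.
  split; rewrite ?last_rcons //.
  - by move: Hu; rewrite -cat_cons -cat_rcons cat_uniq => /andP[].
  - by move: Ha; rewrite all_cat => /andP[].
  - by move: Hc; rewrite map_cat cat_uniq => /andP[].
have P2 : rpath E w (rcons s2 x) x.
  split; rewrite ?last_rcons //.
  - move: Hu; rewrite -cat_cons cat_uniq => /and3P[_ Hn us2].
    have xw2 : x \notin w :: s2.
      by apply/negP => Hx; move/hasPn: Hn => /(_ x Hx); rewrite inE eqxx.
    by rewrite -rcons_cons rcons_uniq xw2.
  - by move: Ha; rewrite all_cat => /andP[].
  - by move: Hc; rewrite map_cat cat_uniq => /and3P[].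
exists (rcons s1 w), (rev (belast w (rcons s2 x))); split; last 2 first.
- by move=> v; rewrite mem_rcons !inE mem_cat !inE => /orP[->|->]; rewrite ?orbT.
- move=> v; rewrite mem_rev belast_rcons !inE mem_cat !inE => /orP[->|->]; by rewrite ?orbT.
- exact: P1.
- exact: rpath_rev P2.
rewrite size_rev size_belast !size_rcons.
move: Hev; rewrite size_cat /= addnS !oddS oddD.
by case: (odd (size s1)); case: (odd (size s2)).
Qed.

(* The cycle is odd, so its two arcs between [x] and [w] have lengths of
   opposite parity. *)
Lemma rainbow_cycle_parity_paths E a s x w : E \subset edges F -> uniq (a :: s) ->
  all (fun e => e \in E) (cycle_edges a s) -> uniq (map color (cycle_edges a s)) ->
  x \in a :: s -> w \in a :: s -> x != w ->
  exists r1 r2, [/\ rpath E x r1 w, rpath E x r2 w, odd (size r1) != odd (size r2),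
    {subset r1 <= a :: s} & {subset r2 <= a :: s}].
Proof.
move=> EF Hu Ha Hc Hx Hw xw.
have [p1 [p2 Es]] : exists p1 p2, a :: s = p1 ++ x :: p2.
  by case/splitPr: Hx => p1 p2; exists p1, p2.
case: p1 Es => [|a' p1] /= [Ea Es]; subst a s.
  move: Hw; rewrite inE eq_sym (negbTE xw) /= => Hw.
  exact: rainbow_cycle_parity_paths_base.
have Hp := perm_cycle_edges_rot a' p1 x p2.
have Hpm : perm_eq (a' :: p1 ++ x :: p2) (x :: p2 ++ a' :: p1).
  by rewrite (perm_catC (a' :: p1) (x :: p2)).
have [||||r1 [r2 [P1 P2 Hp12 S1 S2]]] := @rainbow_cycle_parity_paths_base E x (p2 ++ a' :: p1) w EF.
- by rewrite -(perm_uniq Hpm).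
- by rewrite -(perm_all _ Hp).
- by rewrite -(perm_uniq (perm_map color Hp)).
- by move: Hw; rewrite (perm_mem Hpm) inE eq_sym (negbTE xw).
by exists r1, r2; split => // v Hv; rewrite (perm_mem Hpm); [exact: S1 | exact: S2].
Qed.

(* The two paths close up into a rainbow cycle of [F], which is odd. *)
Lemma rpath_cycle_odd x r z q : rpath (edges F) x r z -> rpath (edges F) z q x -> x != z ->
  {in q, forall v, v != x -> v \notin r} ->
  {in walk_edges x r & walk_edges z q, forall e e', color e != color e'} ->
  odd (size r + size q).
Proof.
move=> P1 P2 xz Hq Hc.
case/lastP: q P2 Hq Hc => [|q x'].
  by case=> _ /= E _ _; move: xz; rewrite E eqxx.
move=> P2 Hq Hc.
have Ex : x' = x by case: P2 => _; rewrite last_rcons.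
subst x'; case: P1 => u1 l1 a1 c1; case: (P2) => u2 _ a2 c2.
have [xq uq] : x \notin q /\ uniq q by move: u2; rewrite /= rcons_uniq => /andP[_ /andP[]].
have Hq' : {in q, forall v, v \notin x :: r}.
  move=> v vq; have vx : v != x by apply: contraNneq xq => <-.
  by rewrite inE negb_or vx /=; apply: Hq vx; rewrite mem_rcons inE vq orbT.
have [U E] := cycle_edges_glue u1 uq Hq'.
have := rainbow_cycle_odd U; rewrite E l1 all_cat a1 a2 => /(_ isT).
rewrite map_cat cat_uniq c1 c2 /= andbT.
have -> : ~~ has (mem (map color (walk_edges x r))) (map color (walk_edges z (rcons q x))).
  apply/hasPn => c /mapP[e' He' ->]; apply/mapP => -[e He /eqP]; rewrite eq_sym.
  by apply/negP; exact: Hc.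
by move=> /(_ isT); rewrite size_cat size_rcons addnS.
Qed.

End EvenCycleFree.

Lemma ord3_cases (k : 'I_3) :
  [\/ k = @Ordinal 3 0 isT, k = @Ordinal 3 1 isT | k = @Ordinal 3 2 isT].
Proof.
case: k => [[|[|[|k]]] Hk] //.
- by constructor 1; apply: val_inj.
- by constructor 2; apply: val_inj.
- by constructor 3; apply: val_inj.
Qed.

Lemma ord3_neq_sym (R : 'I_3 -> 'I_3 -> Prop) : (forall k l, R k l -> R l k) ->
  R (@Ordinal 3 0 isT) (@Ordinal 3 1 isT) -> R (@Ordinal 3 0 isT) (@Ordinal 3 2 isT) ->
  R (@Ordinal 3 1 isT) (@Ordinal 3 2 isT) -> forall k l, k != l -> R k l.
Proof.
move=> Hs H01 H02 H12 k l.
by case: (ord3_cases k) => ->; case: (ord3_cases l) => -> //; auto.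
Qed.

Lemma ord3_third (a b : 'I_3) : exists c, (c != a) && (c != b).
Proof.
case: (ord3_cases a) => ->; case: (ord3_cases b) => ->;
  by [exists (@Ordinal 3 0 isT) | exists (@Ordinal 3 1 isT) | exists (@Ordinal 3 2 isT)].
Qed.

Lemma ord3_cover (a b c k : 'I_3) : a != b -> a != c -> b != c -> [|| k == a, k == b | k == c].
Proof.
by case: (ord3_cases a) => ->; case: (ord3_cases b) => ->; case: (ord3_cases c) => ->;
  case: (ord3_cases k) => ->.
Qed.

Section GraphWalks.
Variables (T C : finType).
Implicit Types (x y : T) (r : seq T) (G : cgraph_of T C).

Lemma path_adj G x r : path (adj G) x r = all (fun e => e \in edges G) (walk_edges x r).
Proof. by elim: r x => [|y r IH] x //=; rewrite IH. Qed.

Lemma path_st_walk G x y : is_path_st G x y ->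
  exists r, [/\ uniq (x :: r), last x r = y & edges G = [set e | e \in walk_edges x r]].
Proof.
case=> [[|x' r] [Hu Hs Hh Hl HE]] //; simpl in Hh; subst x'.
exists r; split => //; rewrite HE; apply/setP => e; rewrite inE /= walk_edges_zip.
by apply/imsetP/mapP => -[p Hp ->]; exists p.
Qed.

Lemma verts_walk G x r : edges G = [set e | e \in walk_edges x r] -> r != [::] ->
  verts G = [set v | v \in x :: r].
Proof.
move=> EG r0; apply/setP => v; rewrite inE; apply/verts_edgesP/idP => [[e]|vr].
  rewrite EG inE => /walk_edgesP[a [b [-> Ha Hb]]].
  by case/set2P=> ->; rewrite // inE Hb orbT.
by have [e He ve] := walk_edges_cover vr r0; exists e; rewrite // EG inE.
Qed.

Lemma theta_walks (Q1 Q2 Q3 : cgraph_of T C) s t : theta_paths Q1 Q2 Q3 s t ->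
  exists rr : 'I_3 -> seq T, [/\
    forall k, [/\ uniq (s :: rr k), last s (rr k) = t &
               edges (nth set0 [:: Q1; Q2; Q3] k) = [set e | e \in walk_edges s (rr k)]],
    forall k l, k != l ->
      forall v, v \in s :: rr k -> v \in s :: rr l -> (v == s) || (v == t) &
    forall k l, k != l ->
      forall e, e \in walk_edges s (rr k) -> e \notin walk_edges s (rr l)].
Proof.
case=> [[st H1] H2 H3 [V12 V13 V23] [D12 D13 D23]].
have [r1 [U1 L1 E1]] := path_st_walk H1.
have [r2 [U2 L2 E2]] := path_st_walk H2.
have [r3 [U3 L3 E3]] := path_st_walk H3.
pose Q k := nth set0 [:: Q1; Q2; Q3] k.
exists (fun k => nth [::] [:: r1; r2; r3] k).
have Hk (k : 'I_3) : [/\ uniq (s :: nth [::] [:: r1; r2; r3] k),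
    last s (nth [::] [:: r1; r2; r3] k) = t
  & edges (Q k) = [set e | e \in walk_edges s (nth [::] [:: r1; r2; r3] k)]].
  by case: (ord3_cases k) => ->.
have vertsQ (k : 'I_3) v : v \in s :: nth [::] [:: r1; r2; r3] k -> v \in verts (Q k).
  have [_ Lk Ek] := Hk k.
  rewrite (verts_walk Ek) ?inE //; apply: contraNneq st => E0.
  by move: Lk; rewrite E0 /= => ->.
have meetQ : forall k l : 'I_3, k != l ->
    forall v, v \in verts (Q k) -> v \in verts (Q l) -> (v == s) || (v == t).
  apply: ord3_neq_sym => [k l H v vk vl|v vQ vQ'|v vQ vQ'|v vQ vQ']; first exact: H.
  - by have := subsetP V12 v; rewrite !inE vQ vQ' => /(_ isT).
  - by have := subsetP V13 v; rewrite !inE vQ vQ' => /(_ isT).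
  - by have := subsetP V23 v; rewrite !inE vQ vQ' => /(_ isT).
split; [exact: Hk | move=> k l kl v /vertsQ vk /vertsQ vl; exact: (meetQ k l kl v vk vl) |].
apply: ord3_neq_sym => [k l H e el|e /= H|e /= H|e /= H].
- by apply/negP => ek; move: (H e ek); rewrite el.
- have : e \in edges Q1 by rewrite E1 inE.
  by move/(disjointFr D12); rewrite E2 inE => ->.
- have : e \in edges Q1 by rewrite E1 inE.
  by move/(disjointFr D13); rewrite E3 inE => ->.
- have : e \in edges Q2 by rewrite E2 inE.
  by move/(disjointFr D23); rewrite E3 inE => ->.
Qed.

Lemma almost_rainbow_inj G u u' : almost_rainbow G -> u \in G -> u' \in G -> u != u' ->
  u.2 = u'.2 -> {in G :\ u' &, injective snd}.
Proof.
move=> Ha uG u'G uu' E; apply/imset_injP.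
have Hsub : snd @: G \subset snd @: (G :\ u').
  apply/subsetP => c /imsetP[w wG ->]; case: (eqVneq w u') => [->|wu'].
    by rewrite -E; apply: imset_f; rewrite !inE uu' uG.
  by apply: imset_f; rewrite !inE wu' wG.
have H2 : #|G :\ u'| = #|G| - 1 by rewrite (cardsD1 u' G) u'G add1n subSS subn0.
by rewrite eqn_leq leq_imset_card /= H2 -Ha; exact: subset_leq_card Hsub.
Qed.

End GraphWalks.

Section Theta.
Variables (T C : finType) (F : cgraph_of T C).
Hypothesis HF : is_cgraph F.
Hypothesis F2 : forall H : cgraph_of T C, H \subset F -> ~ rainbow_even_cycle H.
Local Notation color := (edge_color F).
Local Notation rpath := (rpath F).
Variables (s t : T) (rr : 'I_3 -> seq T).
Hypothesis neq_st : s != t.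
Hypothesis uniq_rr : forall k, uniq (s :: rr k).
Hypothesis last_rr : forall k, last s (rr k) = t.
Hypothesis meet_rr : forall k l, k != l ->
  forall v, v \in s :: rr k -> v \in s :: rr l -> (v == s) || (v == t).
Hypothesis disj_rr : forall k l, k != l ->
  forall e, e \in walk_edges s (rr k) -> e \notin walk_edges s (rr l).
Variable Q : 'I_3 -> cgraph_of T C.
Hypothesis edges_Q : forall k, edges (Q k) = [set e | e \in walk_edges s (rr k)].
Hypothesis rainbow_Q : forall k, rainbow (Q k).
Hypothesis QF : forall k, Q k \subset F.

Definition path_edges k := [set e | e \in walk_edges s (rr k)].
Definition theta_edges := \bigcup_k path_edges k.
Definition theta_graph := \bigcup_k Q k.

Implicit Types (x y z v w : T) (k l a b c : 'I_3) (X : {set {set T}}).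

Lemma rainbow_rr k : uniq (map color (walk_edges s (rr k))).
Proof.
apply: (uniq_edge_color HF (QF k) (rainbow_inj (rainbow_Q k))); first exact: uniq_walk_edges.
by apply/allP => e He; rewrite edges_Q inE.
Qed.

Lemma theta_edgesE : theta_edges = edges theta_graph.
Proof.
apply/setP => e; apply/bigcupP/edgesP => [[k _]|[u /bigcupP[k _ uQ] ->]].
  by rewrite /path_edges -edges_Q => /edgesP[u uQ ->]; exists u => //; apply/bigcupP; exists k.
by exists k; rewrite // /path_edges -edges_Q; apply: imset_f.
Qed.

Lemma theta_edgesF : theta_edges \subset edges F.
Proof. by rewrite theta_edgesE; apply: edgesS; apply/bigcupsP => k _; exact: QF. Qed.

Lemma rr_neq_nil k : rr k != [::].
Proof. by apply: contraNneq neq_st => E; move: (last_rr k); rewrite E /= => ->. Qed.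

Lemma t_in_rr k : t \in rr k.
Proof.
have := mem_last s (rr k); rewrite last_rr inE eq_sym (negbTE neq_st) //.
Qed.

Lemma s_notin_rr k : s \notin rr k.
Proof. by have := uniq_rr k; rewrite /= => /andP[]. Qed.

Lemma path_edges_sub k : path_edges k \subset theta_edges.
Proof. exact: (bigcup_sup k). Qed.

Lemma rpath_theta k : rpath theta_edges s (rr k) t.
Proof.
split; [exact: uniq_rr | exact: last_rr | | exact: rainbow_rr].
by apply/allP => e He; apply: (subsetP (path_edges_sub k)); rewrite inE.
Qed.

Lemma mem_rev_inner k v : v \in rev_inner (rr k) -> v \in rr k /\ v != t.
Proof.
have Hr := rev_belast_inner s (rr_neq_nil k).
have Hrev : rev (s :: rr k) = t :: rev (belast s (rr k)).
  by rewrite [in LHS]lastI rev_rcons last_rr.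
have := uniq_rr k; rewrite -rev_uniq Hrev Hr /= => /andP[Ht Hu'].
move=> Hv; split; last by apply: contraNneq Ht => <-; rewrite mem_rcons inE Hv orbT.
have : v \in rev (s :: rr k) by rewrite Hrev Hr !inE mem_rcons inE Hv !orbT.
rewrite mem_rev inE => /orP[/eqP E|//].
by move: Hu'; rewrite rcons_uniq -E Hv.
Qed.

Lemma theta_cycle a c : a != c ->
  uniq (s :: rr a ++ rev_inner (rr c)) /\
  cycle_edges s (rr a ++ rev_inner (rr c)) = walk_edges s (rr a) ++ rev (walk_edges s (rr c)).
Proof.
move=> ac.
have Hr := rev_belast_inner s (rr_neq_nil c).
have Hrev : t :: rcons (rev_inner (rr c)) s = rev (s :: rr c).
  by rewrite [in RHS]lastI rev_rcons last_rr -Hr.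
have uq : uniq (rev_inner (rr c)).
  by move: (uniq_rr c); rewrite -rev_uniq -Hrev /= rcons_uniq => /and3P[].
have Hq : {in rev_inner (rr c), forall v, v \notin s :: rr a}.
  move=> v /mem_rev_inner [vc vt]; apply/negP => va.
  have vc' : v \in s :: rr c by rewrite inE vc orbT.
  have := meet_rr ac va vc'; rewrite (negbTE vt) orbF => /eqP E.
  by move: vc; rewrite E (negbTE (s_notin_rr c)).
have [U1 E1] := cycle_edges_glue (uniq_rr a) uq Hq.
by split => //; rewrite E1 last_rr -Hr -(last_rr c) walk_edges_rev.
Qed.

Lemma mem_theta_cycle a c v :
  (v \in s :: rr a ++ rev_inner (rr c)) = (v \in s :: rr a) || (v \in s :: rr c).
Proof.
rewrite -cat_cons mem_cat; apply/idP/idP.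
  by case/orP => [->//|/mem_rev_inner[vc _]]; rewrite !inE vc !orbT.
case/orP => [->//|]; rewrite inE => /orP[/eqP->|vc]; first by rewrite mem_head.
case vt: (v == t); first by move/eqP: vt => ->; rewrite inE t_in_rr orbT.
apply/orP; right; have : v \in rev (s :: rr c) by rewrite mem_rev inE vc orbT.
rewrite [in rev _]lastI rev_rcons last_rr rev_belast_inner ?rr_neq_nil //.
rewrite !inE mem_rcons inE vt /= => /orP[/eqP E|//].
by move: vc; rewrite E (negbTE (s_notin_rr c)).
Qed.

Lemma theta_cycle_parity_paths a c X x y : a != c ->
    {in theta_edges :\: X &, injective color} ->
    {in walk_edges s (rr a), forall e, e \notin X} ->
    {in walk_edges s (rr c), forall e, e \notin X} ->
    (x \in s :: rr a) || (x \in s :: rr c) -> (y \in s :: rr a) || (y \in s :: rr c) -> x != y ->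
  exists r1 r2, [/\ rpath (path_edges a :|: path_edges c) x r1 y,
    rpath (path_edges a :|: path_edges c) x r2 y, odd (size r1) != odd (size r2),
    {in r1, forall v, (v \in s :: rr a) || (v \in s :: rr c)} &
    {in r2, forall v, (v \in s :: rr a) || (v \in s :: rr c)}].
Proof.
move=> ac Hinj Xa Xc Hx Hy xy.
have [U1 E1] := theta_cycle ac.
have Hall : all (fun e => e \in path_edges a :|: path_edges c)
                (cycle_edges s (rr a ++ rev_inner (rr c))).
  by apply/allP => e; rewrite E1 mem_cat mem_rev !inE.
have Hsub : path_edges a :|: path_edges c \subset edges F.
  apply: subset_trans theta_edgesF; apply/subUsetP; split; exact: path_edges_sub.
have Hdom e : (e \in walk_edges s (rr a)) || (e \in walk_edges s (rr c)) ->
    e \in theta_edges :\: X.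
  case/orP=> H; rewrite inE.
    by rewrite Xa //=; apply: (subsetP (path_edges_sub a)); rewrite inE H.
  by rewrite Xc //=; apply: (subsetP (path_edges_sub c)); rewrite inE H.
have Hcol : uniq (map color (cycle_edges s (rr a ++ rev_inner (rr c)))).
  rewrite map_inj_in_uniq.
    rewrite E1 cat_uniq rev_uniq !(uniq_walk_edges (uniq_rr _)) /= andbT.
    apply/hasPn => e; rewrite mem_rev => ec.
    by apply/negP => ea; move: (disj_rr ac ea); rewrite ec.
  move=> e e'; rewrite E1 !mem_cat !mem_rev => H1 H2; apply: Hinj; exact: Hdom.
have [||r1 [r2 [P1 P2 Hp S1 S2]]] :=
  rainbow_cycle_parity_paths HF F2 Hsub U1 Hall Hcol (x := x) (w := y) _ _ xy.
- by rewrite mem_theta_cycle.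
- by rewrite mem_theta_cycle.
exists r1, r2; split => // v Hv; rewrite -mem_theta_cycle; [exact: S1 | exact: S2].
Qed.

Lemma path_edges_disj k l e : k != l -> e \in path_edges k -> e \notin path_edges l.
Proof. by move=> kl; rewrite !inE; exact: disj_rr. Qed.

Lemma notin_small_path_edges (X : {set {set T}}) k l :
  X \subset path_edges k -> k != l -> {in walk_edges s (rr l), forall e, e \notin X}.
Proof.
move=> XS kl e el; apply: contraTN el => /(subsetP XS) ek.
by move: (path_edges_disj kl ek); rewrite inE.
Qed.

(* From an inner vertex [y] of path [b], one of the two halves of [b] reaches a
   terminal while avoiding the (at most one) edge of [X]. *)
Lemma theta_escape b (X : {set {set T}}) y : X \subset path_edges b -> #|X| <= 1 ->
    y \in rr b -> y != t ->
  exists w tau, [/\ (w == s) || (w == t), rpath theta_edges w tau y,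
    {in walk_edges w tau, forall e, (e \in path_edges b) && (e \notin X)} &
    {in tau, forall v, (v \in rr b) && (v != t)}].
Proof.
move=> XS X1 yb yt.
have [rb1 [rb2 Eb]] : exists rb1 rb2, rr b = rb1 ++ y :: rb2.
  by case/splitPr: yb => rb1 rb2; exists rb1, rb2.
have Pb := rpath_theta b; rewrite Eb -cat_rcons in Pb.
have S1 := rpath_prefix Pb; rewrite last_rcons in S1.
have S2 := rpath_suffix Pb; rewrite last_rcons in S2.
have Eedges : walk_edges s (rr b) = walk_edges s (rcons rb1 y) ++ walk_edges y rb2.
  by rewrite Eb -cat_rcons walk_edges_cat last_rcons.
have Uedges : uniq (walk_edges s (rr b)) := uniq_walk_edges (uniq_rr b).
case: (boolP (has (mem X) (walk_edges s (rcons rb1 y)))) => [/hasP[e0 e0in e0X]|hn].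
  have L2 : last y rb2 = t by case: S2.
  have P2 := rpath_rev S2.
  exists t, (rev (belast y rb2)); split; rewrite ?eqxx ?orbT //.
  - move=> e; rewrite -L2 walk_edges_rev mem_rev => He2.
    rewrite inE Eedges mem_cat He2 orbT /=; apply: contraTN Uedges => eX.
    have Ee : e = e0 by have := (card_le1P X1) e0 e0X e; rewrite eX inE => /esym/eqP.
    subst e0; rewrite Eedges cat_uniq; apply/negP => /and3P[_ /hasP[]].
    by exists e.
  - case: P2 => /= /andP[tn _] _ _ _ v vin.
    have vy : v \in y :: rb2 by apply: mem_belast; rewrite -mem_rev.
    by rewrite Eb mem_cat vy orbT; apply: contraNneq tn => <-.
exists s, (rcons rb1 y); split; rewrite ?eqxx //.
- move=> e He1; rewrite inE Eedges mem_cat He1 /=.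
  by apply/negP => eX; move/hasP: hn; apply; exists e.
- move=> v vin; rewrite Eb -cat_rcons mem_cat vin /=.
  have tr2 : t \in rb2.
    by move: (mem_last y rb2); case: S2 => _ -> _ _; rewrite inE eq_sym (negbTE yt).
  have : uniq (rcons rb1 y ++ rb2) by rewrite cat_rcons -Eb; case/andP: (uniq_rr b).
  apply: contraTneq => vt; rewrite cat_uniq; apply/negP => /and3P[_ /hasP[]].
  by exists t => //; rewrite -vt.
Qed.

Lemma theta_cross_parity_paths a b c (Xb : {set {set T}}) x y :
    a != b -> a != c -> b != c -> Xb \subset path_edges b -> #|Xb| <= 1 ->
    {in theta_edges :\: Xb &, injective color} ->
    x \in s :: rr a -> x \notin s :: rr c -> y \in s :: rr b -> y \notin s :: rr c ->
  parity_paths F theta_edges x y.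
Proof.
move=> ab ac bc XbS Xb1 Hinj xa xc yb yc.
have yt : y != t by apply: contraNneq yc => ->; rewrite inE t_in_rr orbT.
have yb' : y \in rr b.
  by move: yb; rewrite inE => /orP[/eqP ys|//]; move: yc; rewrite ys mem_head.
have [w [tau [Hw Pt Hte Htv]]] := theta_escape XbS Xb1 yb' yt.
have wac : (w \in s :: rr a) || (w \in s :: rr c).
  by case/orP: Hw => /eqP->; rewrite ?mem_head // inE t_in_rr orbT.
have xw : x != w.
  by case/orP: Hw => /eqP->; apply: contraNneq xc => ->; rewrite ?mem_head // inE t_in_rr orbT.
have xac : (x \in s :: rr a) || (x \in s :: rr c) by rewrite xa.
have ba : b != a by rewrite eq_sym.
have [R1 [R2 [P1 P2 Hp SR1 SR2]]] := theta_cycle_parity_paths ac Hinj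
  (notin_small_path_edges XbS ba) (notin_small_path_edges XbS bc) xac wac xw.
have EacE : path_edges a :|: path_edges c \subset theta_edges.
  by apply/subUsetP; split; exact: path_edges_sub.
have cat_ok R : rpath (path_edges a :|: path_edges c) x R w ->
    {in R, forall v, (v \in s :: rr a) || (v \in s :: rr c)} -> rpath theta_edges x (R ++ tau) y.
  move=> PR SR; apply: rpath_cat (rpathS EacE PR) Pt _ _.
    move=> v /Htv /andP[vb vt]; apply/negP => vin.
    have vs : v != s by apply: contraNneq (s_notin_rr b) => <-.
    have vb' : v \in s :: rr b by rewrite inE vb orbT.
    have vac : (v \in s :: rr a) || (v \in s :: rr c).
      by move: vin; rewrite inE => /orP[/eqP->|/SR//]; rewrite xa.
    case/orP: vac => [va|vc].
      by have := meet_rr ab va vb'; rewrite (negbTE vs) (negbTE vt).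
    by have := meet_rr bc vb' vc; rewrite (negbTE vs) (negbTE vt).
  move=> e e' eR e'T; case: PR => _ _ /allP aR _.
  have /andP[e'b e'X] := Hte e' e'T.
  have enb : e \notin path_edges b.
    by move: (aR e eR); rewrite inE => /orP[] H; apply: (path_edges_disj _ H); rewrite // eq_sym.
  have He1 : e \in theta_edges :\: Xb.
    by rewrite inE (subsetP EacE _ (aR e eR)) andbT; apply: contra enb => /(subsetP XbS).
  have He2 : e' \in theta_edges :\: Xb by rewrite inE e'X; exact: (subsetP (path_edges_sub b)).
  by apply: contraNneq enb => /(Hinj _ _ He1 He2) ->.
exists (R1 ++ tau), (R2 ++ tau); split; [exact: cat_ok | exact: cat_ok |].
rewrite !size_cat !oddD; move: Hp.
by case: (odd (size R1)); case: (odd (size R2)); case: (odd (size tau)).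
Qed.

Lemma theta_parity_paths a b c (Xa Xb : {set {set T}}) x y : a != b -> a != c -> b != c ->
    Xa \subset path_edges a -> #|Xa| <= 1 -> {in theta_edges :\: Xa &, injective color} ->
    Xb \subset path_edges b -> #|Xb| <= 1 -> {in theta_edges :\: Xb &, injective color} ->
    [|| x \in s :: rr a, x \in s :: rr b | x \in s :: rr c] ->
    [|| y \in s :: rr a, y \in s :: rr b | y \in s :: rr c] -> x != y ->
  parity_paths F theta_edges x y.
Proof.
move=> ab ac bc XaS Xa1 Ia XbS Xb1 Ib Hx Hy xy.
have ba : b != a by rewrite eq_sym.
have cycle_case k l (X : {set {set T}}) : k != l ->
    {in theta_edges :\: X &, injective color} ->
    {in walk_edges s (rr k), forall e, e \notin X} ->
    {in walk_edges s (rr l), forall e, e \notin X} ->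
    (x \in s :: rr k) || (x \in s :: rr l) -> (y \in s :: rr k) || (y \in s :: rr l) ->
  parity_paths F theta_edges x y.
  move=> kl I Xk Xl Hxk Hyk.
  have [r1 [r2 [P1 P2 Hp _ _]]] := theta_cycle_parity_paths kl I Xk Xl Hxk Hyk xy.
  have Ekl : path_edges k :|: path_edges l \subset theta_edges.
    by apply/subUsetP; split; exact: path_edges_sub.
  by exists r1, r2; split => //; apply: rpathS Ekl _.
case: (boolP (((x \in s :: rr a) || (x \in s :: rr c)) &&
              ((y \in s :: rr a) || (y \in s :: rr c)))).
  by case/andP; apply: cycle_case Ib
    (notin_small_path_edges XbS ba) (notin_small_path_edges XbS bc).
move=> N1.
case: (boolP (((x \in s :: rr b) || (x \in s :: rr c)) &&
              ((y \in s :: rr b) || (y \in s :: rr c)))).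
  by case/andP; apply: cycle_case Ia
    (notin_small_path_edges XaS ab) (notin_small_path_edges XaS ac).
move=> N2.
have xC : x \notin s :: rr c.
  apply/negP => xc; move: N1 N2; rewrite xc !orbT /= => N1 N2.
  by move: Hy N1 N2; case: (y \in s :: rr a); case: (y \in s :: rr b); case: (y \in s :: rr c).
have yC : y \notin s :: rr c.
  apply/negP => yc; move: N1 N2; rewrite yc !orbT !andbT => N1 N2.
  by move: Hx N1 N2; case: (x \in s :: rr a); case: (x \in s :: rr b); case: (x \in s :: rr c).
move: N1 N2 Hx Hy; rewrite (negbTE xC) (negbTE yC) !orbF.
case: (boolP (x \in s :: rr a)) => xa; case: (boolP (y \in s :: rr a)) => ya //=.
- by move=> _ _ _ yb; exact: (theta_cross_parity_paths ab ac bc XbS Xb1 Ib xa xC yb yC).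
- by move=> _ _ xb _; exact: (theta_cross_parity_paths ba bc ac XaS Xa1 Ia xb xC ya yC).
- by move=> _ N2 xb yb; move: N2; rewrite xb yb.
Qed.

Lemma theta_graphF : theta_graph \subset F.
Proof. by apply/bigcupsP => k _; exact: QF. Qed.

Lemma verts_theta_graph v : v \in verts theta_graph -> exists k, v \in s :: rr k.
Proof.
case/vertsP=> u /bigcupP[k _ uQ] vu; exists k.
move/setP/(_ v): (verts_walk (edges_Q k) (rr_neq_nil k)); rewrite inE => <-.
by apply/vertsP; exists u.
Qed.

Lemma theta_cover a b c v : a != b -> a != c -> b != c -> v \in verts theta_graph ->
  [|| v \in s :: rr a, v \in s :: rr b | v \in s :: rr c].
Proof.
move=> ab ac bc /verts_theta_graph[k vk].
by case/or3P: (ord3_cover k ab ac bc) => /eqP Ek; subst k; rewrite vk ?orbT.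
Qed.

Lemma theta_color_inj_off (H : cgraph_of T C) X : H \subset theta_graph ->
    {in H &, injective snd} -> {in theta_graph, forall u, u.1 \notin X -> u \in H} ->
  {in theta_edges :\: X &, injective color}.
Proof.
move=> HG Hi HX e e' /setDP[+ eX] /setDP[+ e'X].
rewrite theta_edgesE => /edgesP[u uG Eu] /edgesP[u' u'G Eu']; subst e e'.
by apply: (edge_color_inj HF (subset_trans HG theta_graphF) Hi); apply: imset_f; apply: HX.
Qed.

Lemma path_edges_clash k (u : {set T} * C) : u \in Q k -> [set u.1] \subset path_edges k.
Proof. by move=> uQ; rewrite sub1set /path_edges -edges_Q; exact: imset_f. Qed.

(* The colour clash of an almost rainbow theta graph lies on two of its three
   paths; each of the two cycles through the third path avoids one clashing edge. *)
Lemma almost_rainbow_theta_parity_paths x y : almost_rainbow theta_graph ->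
  x \in verts theta_graph -> y \in verts theta_graph -> x != y -> parity_paths F theta_edges x y.
Proof.
move=> Gar xG yG xy.
case: (boolP [exists u, exists u',
               [&& u \in theta_graph, u' \in theta_graph, u != u' & u.2 == u'.2]]).
  case/existsP => u /existsP[u' /and4P[uG u'G uu' /eqP E]].
  have [ka _ uka] := bigcupP uG; have [kb _ ukb] := bigcupP u'G.
  have kab : ka != kb.
    by apply: contraNneq uu' => Ek; subst kb; rewrite (rainbow_inj (rainbow_Q ka) uka ukb E).
  have [c /andP[cka ckb]] := ord3_third ka kb.
  have [kac kbc] : ka != c /\ kb != c by rewrite !(eq_sym _ c).
  have off (w : {set T} * C) :
      {in theta_graph, forall p, p.1 \notin [set w.1] -> p \in theta_graph :\ w}.
    by move=> p pG; rewrite !inE pG andbT; apply: contraNneq => ->.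
  have u'u : u' != u by rewrite eq_sym.
  have Ia := theta_color_inj_off (subsetDl _ _)
    (almost_rainbow_inj Gar u'G uG u'u (esym E)) (off u).
  have Ib := theta_color_inj_off (subsetDl _ _) (almost_rainbow_inj Gar uG u'G uu' E) (off u').
  exact: (theta_parity_paths kab kac kbc (path_edges_clash uka) (eq_leq (cards1 _)) Ia
    (path_edges_clash ukb) (eq_leq (cards1 _)) Ib (theta_cover kab kac kbc xG)
    (theta_cover kab kac kbc yG) xy).
move/existsPn => noclash.
have Gi : {in theta_graph &, injective snd}.
  move=> u u' uG u'G E; apply/eqP; apply: contraTT (noclash u) => uu'.
  by rewrite negbK; apply/existsP; exists u'; rewrite uG u'G uu' E eqxx.
have I0 := @theta_color_inj_off theta_graph set0 (subxx _) Gi (fun u uG _ => uG).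
have [o01 o02 o12] : [/\ @Ordinal 3 0 isT != @Ordinal 3 1 isT,
  @Ordinal 3 0 isT != @Ordinal 3 2 isT & @Ordinal 3 1 isT != @Ordinal 3 2 isT] by [].
have no_clash : #|(set0 : {set {set T}})| <= 1 by rewrite cards0.
exact: (theta_parity_paths o01 o02 o12 (sub0set _) no_clash I0 (sub0set _) no_clash I0
  (theta_cover o01 o02 o12 xG) (theta_cover o01 o02 o12 yG) xy).
Qed.

End Theta.

Section Pieces.
Variables (T C : finType) (F : cgraph_of T C).
Hypothesis HF : is_cgraph F.
Hypothesis F2 : forall H : cgraph_of T C, H \subset F -> ~ rainbow_even_cycle H.
Implicit Types (x y v : T) (G : cgraph_of T C).
Local Notation rpath := (rpath F).

Lemma tree_rpath G x y : G \subset F -> is_tree G -> rainbow G ->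
  x \in verts G -> y \in verts G -> exists r, rpath (edges G) x r y.
Proof.
move=> GF [_ Gconn _] Gr xG yG.
case/connectP: (Gconn x y xG yG) => p Hp ->.
case: (shortenP Hp) => p' Hp' Hu _.
exists p'; split => //; first by rewrite -path_adj.
apply: (uniq_edge_color HF GF (rainbow_inj Gr)); first exact: uniq_walk_edges.
by rewrite -path_adj.
Qed.

Lemma odd_cycle_parity_paths G x y : G \subset F -> long_rainbow_odd_cycle G ->
  x \in verts G -> y \in verts G -> x != y -> parity_paths F (edges G) x y.
Proof.
move=> GF [[[|a s] [Hu Hs HE]] Gr _ _] // xG yG xy.
have EG : edges G = [set e | e \in cycle_edges a s].
  apply/setP => e; rewrite HE rot1_cons /cycle_edges walk_edges_rcons_zip inE.
  by apply/imsetP/idP => [[p Hp ->]|/mapP[p Hp ->]]; [exact: map_f | by exists p].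
have Hv v : v \in verts G -> v \in a :: s.
  have n0 : rcons s a != [::] by case: (s).
  by rewrite (verts_walk EG n0) in_set in_cons mem_rcons => /orP[/eqP->|]; rewrite ?mem_head.
have Ha : all (fun e => e \in edges G) (cycle_edges a s) by apply/allP => e; rewrite EG inE.
have Hc := uniq_edge_color HF GF (rainbow_inj Gr) (uniq_cycle_edges Hu Hs) Ha.
have [r1 [r2 [P1 P2 Hp _ _]]] :=
  rainbow_cycle_parity_paths HF F2 (edgesS GF) Hu Ha Hc (Hv _ xG) (Hv _ yG) xy.
by exists r1, r2.
Qed.

Lemma bad_piece_parity_paths G x y : G \subset F -> bad_piece G ->
  x \in verts G -> y \in verts G -> x != y -> parity_paths F (edges G) x y.
Proof.
move=> GF [Gar _ [Q1 [Q2 [Q3 [s [t [Hth EG R1 R2 R3]]]]]]] xG yG xy.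
have st : s != t by case: Hth => [[]].
have [rr [Hk Hmeet Hdisj]] := theta_walks Hth.
pose Q (k : 'I_3) := nth set0 [:: Q1; Q2; Q3] k.
have EQ : G = theta_graph Q.
  rewrite EG; apply/setP => u; apply/idP/bigcupP => [|[k _]].
    rewrite !inE => /orP[/orP[]|] uQ;
      by [exists (@Ordinal 3 0 isT) | exists (@Ordinal 3 1 isT) | exists (@Ordinal 3 2 isT)].
  by case: (ord3_cases k) => -> /= uQ; rewrite !inE uQ ?orbT.
have QF (k : 'I_3) : Q k \subset F.
  by apply: subset_trans GF; rewrite EQ; exact: bigcup_sup.
have RQ (k : 'I_3) : rainbow (Q k) by case: (ord3_cases k) => ->.
have Hu k : uniq (s :: rr k) by case: (Hk k).
have Hl k : last s (rr k) = t by case: (Hk k).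
have EdQ k : edges (Q k) = [set e | e \in walk_edges s (rr k)] by case: (Hk k).
rewrite EQ in Gar xG yG *; rewrite -(theta_edgesE EdQ).
exact: (almost_rainbow_theta_parity_paths HF F2 st Hu Hl Hmeet Hdisj EdQ RQ QF Gar xG yG xy).
Qed.

End Pieces.

Section Frankenstein.
Variables (T C : finType) (m : nat) (F : cgraph_of T C) (P : 'I_m -> cgraph_of T C).
Hypothesis HF : is_cgraph F.
Hypothesis Hpart : is_partition F P.
Hypothesis Htype : forall i : 'I_m, [\/ long_rainbow_odd_cycle (P i), bad_piece (P i)
                          | (is_tree (P i) /\ rainbow (P i))].
Hypothesis F1 : forall i j : 'I_m, i != j -> is_tree (P i) -> rainbow (P i) ->
        is_tree (P j) -> rainbow (P j) -> [disjoint verts (P i) & verts (P j)].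
Hypothesis F2 : forall H : cgraph_of T C, H \subset F -> ~ rainbow_even_cycle H.
Implicit Types (x y z v w u : T) (r q : seq T) (i j A : 'I_m) (S : {set 'I_m}).
Local Notation color := (edge_color F).
Local Notation rpath := (rpath F).

Definition tree_part i := is_tree (P i) /\ rainbow (P i).

Definition union_parts S : cgraph_of T C := \bigcup_(i in S) P i.

Lemma part_subF i : P i \subset F.
Proof. by case: Hpart => -> _ _; exact: (bigcup_sup i). Qed.

Lemma parts_color_neq i j e e' : i != j -> e \in edges (P i) -> e' \in edges (P j) ->
  color e != color e'.
Proof.
move=> ij /edgesP[u uP ->] /edgesP[u' u'P ->].
have uF := subsetP (part_subF i) _ uP; have u'F := subsetP (part_subF j) _ u'P.
rewrite !edge_colorE //; apply/eqP => -[E].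
case: Hpart => _ _ /(_ i j ij) /disjoint_setI0 /setP /(_ u.2).
by rewrite !inE (imset_f snd uP) E (imset_f snd u'P).
Qed.

Lemma parts_common_vertex i j v v' : i != j -> v \in verts (P i) -> v \in verts (P j) ->
  v' \in verts (P i) -> v' \in verts (P j) -> v = v'.
Proof.
move=> ij vi vj v'i v'j; apply/eqP; case: Hpart => _ Hc _; apply: contraTT (Hc i j ij).
by move=> vv; rewrite -ltnNge; apply/card_gt1P; exists v, v'; rewrite !inE vi vj v'i v'j.
Qed.

Lemma verts_unionP S v :
  reflect (exists2 i, i \in S & v \in verts (P i)) (v \in verts (union_parts S)).
Proof.
apply: (iffP (vertsP _ v)) => [[u /bigcupP[i iS uP] vu]|[i iS /vertsP[u uP vu]]].
  by exists i => //; apply/vertsP; exists u.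
by exists u => //; apply/bigcupP; exists i.
Qed.

Lemma edges_unionP S e :
  reflect (exists2 i, i \in S & e \in edges (P i)) (e \in edges (union_parts S)).
Proof.
apply: (iffP (edgesP _ e)) => [[u /bigcupP[i iS uP] ->]|[i iS /edgesP[u uP ->]]].
  by exists i => //; apply/edgesP; exists u.
by exists u => //; apply/bigcupP; exists i.
Qed.

Lemma verts_part_union i S v : i \in S -> v \in verts (P i) -> v \in verts (union_parts S).
Proof. by move=> iS vi; apply/verts_unionP; exists i. Qed.

Lemma edges_part_union i S : i \in S -> edges (P i) \subset edges (union_parts S).
Proof. by move=> iS; apply/subsetP => e He; apply/edges_unionP; exists i. Qed.

Lemma edges_unionS S S' : S \subset S' -> edges (union_parts S) \subset edges (union_parts S').
Proof.
move=> SS'; apply/subsetP => e /edges_unionP[i iS He]; apply/edges_unionP.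
by exists i; rewrite ?(subsetP SS').
Qed.

Lemma edges_union_subF S : edges (union_parts S) \subset edges F.
Proof. by apply: edgesS; apply/bigcupsP => i _; exact: part_subF. Qed.

Lemma color_union_part_neq S A e e' : A \notin S -> e \in edges (union_parts S) ->
  e' \in edges (P A) -> color e != color e'.
Proof.
move=> AS /edges_unionP[j jS Hj] He'; apply: (parts_color_neq _ Hj He').
by apply: contraNneq AS => <-.
Qed.

Lemma color_avoiding_neq S i w r y e e' : rpath (edges (union_parts S)) w r y ->
    {in r, forall v, v \notin verts (P i)} ->
  e \in walk_edges w r -> e' \in edges (P i) -> color e != color e'.
Proof.
case=> _ _ /allP a _ Hr He He'.
have /edges_unionP[j jS Hj] := a e He.
have [u [b [Eu _ bj]]] := walk_edgesP He.
apply: (parts_color_neq _ Hj He'); apply: contraNneq (Hr b bj) => ji; subst j.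
by apply/verts_edgesP; exists e; rewrite // Eu !inE eqxx orbT.
Qed.

Lemma nontree_part i : ~ tree_part i -> long_rainbow_odd_cycle (P i) \/ bad_piece (P i).
Proof. by case: (Htype i) => [H|H|//]; [left|right]. Qed.

Lemma part_parity_paths i x y : long_rainbow_odd_cycle (P i) \/ bad_piece (P i) ->
  x \in verts (P i) -> y \in verts (P i) -> x != y -> parity_paths F (edges (P i)) x y.
Proof.
case=> H xP yP xy; first exact: (odd_cycle_parity_paths HF F2 (part_subF i) H xP yP xy).
exact: (bad_piece_parity_paths HF F2 (part_subF i) H xP yP xy).
Qed.

Lemma part_rpath i x y : x \in verts (P i) -> y \in verts (P i) ->
  exists r, rpath (edges (P i)) x r y.
Proof.
move=> xP yP; case: (eqVneq x y) => [<-|xy]; first by exists [::].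
have iF := part_subF i.
case: (Htype i) => [H|H|[Ti Ri]]; last exact: (tree_rpath HF iF Ti Ri xP yP).
  by have [r [_ [Pr _ _]]] := part_parity_paths (or_introl H) xP yP xy; exists r.
by have [r [_ [Pr _ _]]] := part_parity_paths (or_intror H) xP yP xy; exists r.
Qed.

Definition linked S := {in verts (union_parts S) &, forall x y,
  exists r, rpath (edges (union_parts S)) x r y}.

Definition escapes S := forall x y, x \in verts (union_parts S) ->
    y \in verts (union_parts S) -> x != y ->
    (forall i, i \in S -> x \in verts (P i) -> ~ tree_part i) ->
  exists i w r, [/\ i \in S, x \in verts (P i), (w \in verts (P i)) && (w != x),
    rpath (edges (union_parts S)) w r y & {in r, forall v, v \notin verts (P i)}].

Lemma verts_union0 v : v \notin verts (union_parts set0).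
Proof. by apply/negP => /verts_unionP[i]; rewrite inE. Qed.

Lemma verts_union1 A v : (v \in verts (union_parts [set A])) = (v \in verts (P A)).
Proof.
by apply/verts_unionP/idP => [[i /set1P-> //]|vA]; exists A; rewrite ?set11.
Qed.

Lemma linked1 A : linked [set A].
Proof.
move=> x y; rewrite !verts_union1 => xA yA.
have [r Pr] := part_rpath xA yA.
by exists r; apply: rpathS Pr; apply: edges_part_union; rewrite set11.
Qed.

Lemma escapes1 A : escapes [set A].
Proof.
move=> x y; rewrite !verts_union1 => xA yA xy _.
by exists A, y, [::]; rewrite set11 yA eq_sym xy.
Qed.

Section Attach.
Variables (S : {set 'I_m}) (A : 'I_m) (v : T).
Hypotheses (AS : A \notin S) (vA : v \in verts (P A)) (vS : v \in verts (union_parts S)).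
Hypothesis attach1 : {in verts (P A), forall u, u \in verts (union_parts S) -> u = v}.

Lemma verts_union_attach u : u \in verts (union_parts (A |: S)) ->
  (u \in verts (P A)) || (u \in verts (union_parts S)).
Proof.
case/verts_unionP=> i; rewrite !inE => /orP[/eqP->->//|iS ui].
by rewrite (verts_part_union iS ui) orbT.
Qed.

Lemma rpath_attach w r q y : w \in verts (union_parts S) ->
    rpath (edges (union_parts S)) w r v -> rpath (edges (P A)) v q y ->
  rpath (edges (union_parts (A |: S))) w (r ++ q) y.
Proof.
move=> wS Pr Pq.
apply: rpath_cat (rpathS (edges_unionS (subsetUr _ _)) Pr)
  (rpathS (edges_part_union (setU11 _ _)) Pq) _ _.
  move=> u uq; apply/negP => uwr.
  have uS : u \in verts (union_parts S).
    by move: uwr; rewrite inE => /orP[/eqP->//|/(rpath_verts Pr)].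
  have := attach1 (rpath_verts Pq uq) uS => Euv.
  by case: Pq => /= /andP[vq _] _ _ _; move: vq; rewrite -Euv uq.
move=> e e' He He'; apply: (color_union_part_neq AS).
  by case: Pr => _ _ /allP/(_ e He).
by case: Pq => _ _ /allP/(_ e' He').
Qed.

Lemma linked_attach : linked S -> linked (A |: S).
Proof.
move=> linkS.
have mix x y : x \in verts (union_parts S) -> y \in verts (P A) ->
    exists r, rpath (edges (union_parts (A |: S))) x r y.
  move=> xS yA; have [r1 P1] := linkS x v xS vS; have [r2 P2] := part_rpath vA yA.
  by exists (r1 ++ r2); exact: rpath_attach P1 P2.
move=> x y /verts_union_attach/orP[xA|xS] /verts_union_attach/orP[yA|yS].
- have [r Pr] := part_rpath xA yA.
  by exists r; apply: rpathS Pr; apply: edges_part_union; rewrite setU11.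
- by have [r Pr] := mix y x yS xA; exists (rev (belast y r)); exact: rpath_rev.
- exact: mix.
- have [r Pr] := linkS x y xS yS.
  by exists r; apply: rpathS Pr; apply: edges_unionS; apply: subsetUr.
Qed.

Lemma escapes_attach : linked S -> escapes S -> escapes (A |: S).
Proof.
move=> linkS escS x y /verts_union_attach Hx /verts_union_attach Hy xy Hn.
have notree i : i \in S -> x \in verts (P i) -> ~ tree_part i.
  by move=> iS; apply: Hn; rewrite inE iS orbT.
have lift z : z \in verts (union_parts S) -> x \in verts (union_parts S) -> x != z ->
    exists i w r, [/\ i \in A |: S, x \in verts (P i), (w \in verts (P i)) && (w != x),
      rpath (edges (union_parts (A |: S))) w r z & {in r, forall u, u \notin verts (P i)}].
  move=> zS xS xz; have [i [w [r [iS xi wi Pr Hr]]]] := escS x z xS zS xz notree.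
  exists i, w, r; split; rewrite ?inE ?iS ?orbT //.
  exact: rpathS (edges_unionS (subsetUr _ _)) Pr.
case: (boolP (x \in verts (P A))) => [xA|xA].
  case/orP: Hy => [yA|yS]; first by exists A, y, [::]; rewrite setU11 yA eq_sym xy.
  case: (boolP (x \in verts (union_parts S))) => [xS|xS]; first exact: lift.
  have vx : v != x by apply: contraNneq xS => <-.
  have [r Pr] := linkS v y vS yS.
  exists A, v, r; split; rewrite ?setU11 ?vA ?vx //.
    exact: rpathS (edges_unionS (subsetUr _ _)) Pr.
  move=> u ur; apply/negP => uA.
  have := attach1 uA (rpath_verts Pr ur) => Euv.
  by case: Pr => /= /andP[vr _] _ _ _; move: vr; rewrite -Euv ur.
have xS : x \in verts (union_parts S) by move: Hx; rewrite (negbTE xA).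
case: (boolP (y \in verts (union_parts S))) => [yS|yS]; first exact: lift.
have yA : y \in verts (P A) by move: Hy; rewrite (negbTE yS) orbF.
have xv : x != v by apply: contraNneq xA => ->.
have [i [w [r [iS xi /andP[wi wx] Pr Hr]]]] := escS x v xS vS xv notree.
have [q Pq] := part_rpath vA yA.
have notv : {in q, forall u, u != v}.
  by move=> u uq; case: Pq => /= /andP[vq _] _ _ _; apply: contraNneq vq => <-.
exists i, w, (r ++ q); split; rewrite ?inE ?iS ?orbT ?wi ?wx //.
  exact: rpath_attach (verts_part_union iS wi) Pr Pq.
move=> u; rewrite mem_cat => /orP[/Hr//|uq]; apply/negP => ui.
by move: (notv u uq); rewrite (attach1 (rpath_verts Pq uq) (verts_part_union iS ui)) eqxx.
Qed.

End Attach.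

Lemma odd_addn_neq a b1 b2 : odd b1 != odd b2 -> odd (b1 + a) -> odd (b2 + a) -> False.
Proof. by rewrite !oddD; case: (odd a); case: (odd b1); case: (odd b2). Qed.

Lemma attach_cycle_odd S A x p z q : A \notin S -> x != z ->
    rpath (edges (union_parts S)) x p z -> rpath (edges (P A)) z q x ->
    {in q, forall v, v != x -> v \notin p} ->
  odd (size q + size p).
Proof.
move=> AS xz Pp Pq Hq; rewrite addnC.
have Pq' : rpath (edges F) z q x by apply: rpathS Pq; apply: edgesS; exact: part_subF.
apply: (rpath_cycle_odd HF F2 (rpathS (edges_union_subF S) Pp) Pq' xz Hq).
move=> e e' He He'; apply: (color_union_part_neq AS).
  by case: Pp => _ _ /allP/(_ e He).
by case: Pq => _ _ /allP/(_ e' He').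
Qed.

Lemma no_double_attachment_cyclic S A x y : linked S -> A \notin S ->
    long_rainbow_odd_cycle (P A) \/ bad_piece (P A) ->
    x \in verts (P A) -> x \in verts (union_parts S) ->
    y \in verts (P A) -> y \in verts (union_parts S) -> x != y -> False.
Proof.
move=> linkS AS nTA xA xS yA yS xy.
have [r Pr] := linkS x y xS yS.
have hy : has (mem (verts (P A))) r by apply/hasP; exists y; rewrite // (rpath_last_mem Pr).
have [r1 [z [Pz zA hr1 sub]]] := rpath_first_hit Pr hy.
have zx : z != x.
  have zr : z \in r by apply: sub; rewrite mem_rcons mem_head.
  by case: Pr => /andP[xr _] _ _ _; apply: contraNneq xr => <-.
have [R1 [R2 [PR1 PR2 Hp]]] := part_parity_paths nTA zA xA zx.
have close R : rpath (edges (P A)) z R x -> odd (size R + size (rcons r1 z)).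
  have xz : x != z by rewrite eq_sym.
  move=> PR; apply: (attach_cycle_odd AS xz Pz PR).
  move=> v vR _; have vA := rpath_verts PR vR.
  have vz : v != z by case: PR => /= /andP[zR _] _ _ _; apply: contraNneq zR => <-.
  rewrite mem_rcons inE (negbTE vz); apply: contraNN hr1 => vr1.
  by apply/hasP; exists v.
exact: odd_addn_neq Hp (close _ PR1) (close _ PR2).
Qed.

Lemma no_double_attachment_tree S A x y : escapes S -> A \notin S -> tree_part A ->
    x \in verts (P A) -> x \in verts (union_parts S) ->
    y \in verts (P A) -> y \in verts (union_parts S) -> x != y -> False.
Proof.
move=> escS AS [TA RA] xA xS yA yS xy.
have notree i : i \in S -> x \in verts (P i) -> ~ tree_part i.
  move=> iS xi [Ti Ri]; have iA : i != A by apply: contraNneq AS => <-.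
  by move: (disjointFr (F1 iA Ti Ri TA RA) xi); rewrite xA.
have [i [w [r [iS xi /andP[wi wx] Pr Hr]]]] := escS x y xS yS xy notree.
have iA : i != A by apply: contraNneq AS => <-.
have PiA v : v \in verts (P i) -> v \in verts (P A) -> v = x.
  by move=> vi vA; exact: parts_common_vertex iA vi vA xi xA.
have wy : w != y by apply: contraNneq wx => Ewy; apply/eqP/PiA; rewrite // Ewy.
have hy : has (mem (verts (P A))) r by apply/hasP; exists y; rewrite // (rpath_last_mem Pr).
have [r1 [z [Pz zA hr1 sub]]] := rpath_first_hit Pr hy.
have zi : z \notin verts (P i) by apply: Hr; apply: sub; rewrite mem_rcons mem_head.
have xz : x != z by apply: contraNneq zi => <-.
have xw : x != w by rewrite eq_sym.
have [R1 [R2 [PR1 PR2 Hp]]] := part_parity_paths (nontree_part (notree i iS xi)) xi wi xw.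
have [q Pq] := part_rpath zA xA.
have prefix_out : {in rcons r1 z, forall v, v \notin verts (P i)}.
  by move=> v /sub; apply: Hr.
have glue R : rpath (edges (P i)) x R w -> rpath (edges (union_parts S)) x (R ++ rcons r1 z) z.
  move=> PR; apply: (rpath_cat (rpathS (edges_part_union iS) PR) Pz).
    move=> u /prefix_out ui; rewrite inE negb_or; apply/andP; split.
      by apply: contraNneq ui => ->.
    by apply: contra ui => uR; exact: (rpath_verts PR uR).
  move=> e e' He He'; rewrite eq_sym; apply: (color_avoiding_neq Pz prefix_out He').
  by case: PR => _ _ /allP/(_ e He).
have close R : rpath (edges (P i)) x R w -> odd (size R + (size q + size (rcons r1 z))).
  move=> PR; rewrite addnCA -size_cat; apply: (attach_cycle_odd AS xz (glue R PR) Pq).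
  move=> v vq vx; have vA := rpath_verts Pq vq.
  rewrite mem_cat negb_or; apply/andP; split.
    by apply: contra vx => /(rpath_verts PR) vi; apply/eqP/PiA.
  have vz : v != z by case: Pq => /= /andP[zq _] _ _ _; apply: contraNneq zq => <-.
  rewrite mem_rcons inE (negbTE vz); apply: contraNN hr1 => vr1.
  by apply/hasP; exists v.
exact: odd_addn_neq Hp (close _ PR1) (close _ PR2).
Qed.

Lemma attach_le1 S A : linked S -> escapes S -> A \notin S ->
  #|verts (P A) :&: verts (union_parts S)| <= 1.
Proof.
move=> linkS escS AS; rewrite leqNgt; apply/negP => /card_gt1P[x [y [+ + xy]]].
rewrite !inE => /andP[xA xS] /andP[yA yS].
case: (Htype A) => [H|H|TA]; last exact: no_double_attachment_tree escS AS TA xA xS yA yS xy.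
  exact: no_double_attachment_cyclic linkS AS (or_introl H) xA xS yA yS xy.
exact: no_double_attachment_cyclic linkS AS (or_intror H) xA xS yA yS xy.
Qed.

Definition attach_order (D : seq 'I_m) := forall D1 A D2, D = D1 ++ A :: D2 ->
  #|verts (union_parts [set i in D1]) :&: verts (P A)| <= 1.

Lemma attach_order_rcons D A : attach_order D ->
  #|verts (union_parts [set i in D]) :&: verts (P A)| <= 1 -> attach_order (rcons D A).
Proof.
move=> oD DA D1 A' D2; case/lastP: D2 => [|D2 a].
  by rewrite cats1 => /rcons_inj[<- <-].
by rewrite -rcons_cons -rcons_cat => /rcons_inj[/oD].
Qed.

(* [D] lists the parts placed so far and [S] the current block; unplaced parts
   meet the placed ones only inside [S]. *)
Definition growing D S := [/\ uniq D, attach_order D, S \subset [set i in D],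
  linked S /\ escapes S &
  forall i, i \notin D ->
    verts (P i) :&: verts (union_parts [set j in D]) \subset verts (union_parts S)].

Lemma growing_nil : growing [::] set0.
Proof.
split=> //; first by case.
- by split=> x y; rewrite (negbTE (verts_union0 x)).
- by move=> i _; apply/subsetP => v /setIP[_ /verts_unionP[j]]; rewrite inE.
Qed.

Lemma verts_union_rcons D A v : v \in verts (union_parts [set j in rcons D A]) ->
  (v \in verts (P A)) || (v \in verts (union_parts [set j in D])).
Proof.
case/verts_unionP=> j; rewrite inE mem_rcons inE => /orP[/eqP->->//|jD vj].
by rewrite (verts_part_union _ vj) ?orbT // inE.
Qed.

Lemma growing_step D S A0 : growing D S -> A0 \notin D ->
  exists A S', A \notin D /\ growing (rcons D A) S'.
Proof.
move=> [uD oD SD [linkS escS] rest] A0D.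
have notS A : A \notin D -> A \notin S by move=> AD; apply: contra AD => /(subsetP SD); rewrite inE.
have meet_le A : A \notin D -> #|verts (P A) :&: verts (union_parts S)| <= 1 ->
    #|verts (union_parts [set i in D]) :&: verts (P A)| <= 1.
  by move=> AD; apply: leq_trans; apply: subset_leq_card; rewrite subsetI subsetIr setIC rest.
case: (pickP (fun A => (A \notin D) && (#|verts (P A) :&: verts (union_parts S)| == 1))).
  move=> A /andP[AD /cards1P[v Ev]].
  have /setIP[vA vS] : v \in verts (P A) :&: verts (union_parts S) by rewrite Ev set11.
  have attach1 : {in verts (P A), forall u, u \in verts (union_parts S) -> u = v}.
    by move=> u uA uS; apply/set1P; rewrite -Ev inE uA uS.
  exists A, (A |: S); split => //; split.
  - by rewrite rcons_uniq AD.
  - by apply: attach_order_rcons oD (meet_le A AD _); rewrite Ev cards1.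
  - apply/subsetP => i; rewrite !inE mem_rcons inE => /orP[->//|/(subsetP SD)].
    by rewrite inE => ->; rewrite orbT.
  - split; first exact: linked_attach (notS A AD) vA vS attach1 linkS.
    exact: escapes_attach (notS A AD) vA vS attach1 linkS escS.
  move=> i; rewrite mem_rcons inE negb_or => /andP[iA iD]; apply/subsetP => u /setIP[ui].
  case/verts_union_rcons/orP => [uA|uinD]; first by apply: verts_part_union uA; rewrite setU11.
  have uiD : u \in verts (P i) :&: verts (union_parts [set j in D]) by rewrite inE ui.
  have /verts_unionP[j jS uj] := subsetP (rest i iD) u uiD.
  by apply: verts_part_union uj; rewrite inE jS orbT.
move=> none1.
have none A : A \notin D -> verts (P A) :&: verts (union_parts S) = set0.
  move=> AD; apply: cards0_eq; have := none1 A; rewrite AD /=.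
  by have := attach_le1 linkS escS (notS A AD); case: #|_| => [|[|]].
exists A0, [set A0]; split => //; split.
- by rewrite rcons_uniq A0D.
- by apply: attach_order_rcons oD (meet_le A0 A0D _); rewrite none // cards0.
- by apply/subsetP => i; rewrite !inE mem_rcons inE => ->.
- by split; [exact: linked1 | exact: escapes1].
move=> i; rewrite mem_rcons inE negb_or => /andP[iA iD]; apply/subsetP => u /setIP[ui].
case/verts_union_rcons/orP => [uA|uinD]; first by rewrite verts_union1.
have uiD : u \in verts (P i) :&: verts (union_parts [set j in D]) by rewrite inE ui.
have uS := subsetP (rest i iD) u uiD.
have : u \in verts (P i) :&: verts (union_parts S) by rewrite inE ui.
by rewrite none // inE.
Qed.

Lemma growing_complete n D S : #|[set i | i \notin D]| = n -> growing D S ->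
  exists D', [/\ uniq D', attach_order D' & forall i, i \in D'].
Proof.
elim: n D S => [|n IH] D S Hn gDS.
  exists D; case: gDS => uD oD _ _ _; split => // i.
  by move/cards0_eq/setP/(_ i): Hn; rewrite !inE; case: (i \in D).
have [A0 A0D] : exists A0, A0 \notin D.
  have : 0 < #|[set i | i \notin D]| by rewrite Hn.
  by rewrite card_gt0 => /set0Pn[A0]; rewrite inE; exists A0.
have [A [S' [AD gDS']]] := growing_step gDS A0D.
apply: IH gDS'; move: Hn; rewrite (cardsD1 A) inE AD add1n => -[<-].
by apply: eq_card => i; rewrite !inE mem_rcons inE negb_or andbC.
Qed.

End Frankenstein.
Lemma perm_of_enum m (D : seq 'I_m) (i0 : 'I_m) : uniq D -> size D = m ->
  exists sigma : 'S_m, forall j : 'I_m, sigma j = nth i0 D j.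
Proof.
move=> uD sD.
have finj : injective (fun j : 'I_m => nth i0 D j).
  by move=> j j' /eqP; rewrite nth_uniq ?sD // => /eqP; exact: val_inj.
by exists (perm finj) => j; rewrite permE.
Qed.

Lemma bigcup_nth_take (T : finType) m (f : 'I_m -> {set T}) (D : seq 'I_m) (i0 : 'I_m) k :
    size D = m -> k <= m ->
  \bigcup_(j < m | j < k) f (nth i0 D j) = \bigcup_(i in [set i in take k D]) f i.
Proof.
move=> sD km; apply/setP => u; apply/bigcupP/bigcupP => [[j jk uf]|[i iT uf]].
  exists (nth i0 D j) => //; rewrite inE -(nth_take i0 jk).
  by apply: mem_nth; rewrite size_takel // sD.
rewrite inE in iT.
have jk : index i (take k D) < k by rewrite -{2}(size_takel (_ : k <= size D)) ?index_mem ?sD.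
exists (Ordinal (leq_trans jk km)) => //=.
by rewrite -(nth_take i0 jk) nth_index.
Qed.

Theorem theorem2p4 (T C : finType) (m : nat) (F : cgraph_of T C)
    (P : 'I_m -> cgraph_of T C) :
  frankenstein F P ->
  exists sigma : 'S_m,
    forall k : 'I_m, 0 < k ->
      #|verts (\bigcup_(j < m | j < k) P (sigma j)) :&: verts (P (sigma k))| <= 1.
Proof.
case=> [[HF Hm] Hpart Htype F1 F2].
have [D [uD oD allD]] := growing_complete HF Hpart Htype F1 F2 (erefl _) (growing_nil F P).
have sD : size D = m by rewrite -(card_uniqP uD) -[RHS]card_ord; apply: eq_card.
have [sigma Esigma] := perm_of_enum (Ordinal Hm) uD sD.
exists sigma => k _.
under eq_bigr => j _ do rewrite Esigma.
rewrite bigcup_nth_take // ?Esigma; last exact: ltnW.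
by apply: oD; rewrite -[LHS](cat_take_drop k) (drop_nth (Ordinal Hm)) // sD.
Qed.
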